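(* For all $n\in\mathbf N$ and integers $m$ with $0\le m\le n-1$, $$\left\langle{n\atop m}\right\rangle=\left\langle{n-1\atop m}\right\rangle^{(1,0)} .$$
   Context: Euler numbers: $\left\langle{0\atop 0}\right\rangle=1$, $\left\langle{n\atop k}\right\rangle=0$ for $k<0$ or $k>n$, $\left\langle{n\atop k}\right\rangle=(n-k)\left\langle{n-1\atop k-1}\right\rangle+(k+1)\left\langle{n-1\atop k}\right\rangle$. For sequences $a=(a_j)_{j\ge1}$, $b=(b_j)_{j\ge0}$ and $\omega=(\varepsilon_1,\dots,\varepsilon_N)\in\{0,1\}^N$ let $w^{a,b}_N(\omega)=\prod_{t=1}^N g_t$ where, with $j=\#\{l<t:\varepsilon_l=0\}$, $g_t=a_{t-j}$ if $\varepsilon_t=0$ and $g_t=b_j$ if $\varepsilon_t=1$; let $\zeta_{Nk}(a,b)=\sum w^{a,b}_N(\omega)$ over $\omega$ with exactly $k$ zeros ($N\ge1$, $0\le k\le N$), $\zeta_{00}=1$, $\zeta_{Nk}=0$ if $k<0$ or $k>N$. For integers $0\le\mu\le\nu$, the associated Euler numbers of rank $(\nu,\mu)$ are $\left\langle{N\atop k}\right\rangle^{(\nu,\mu)}=\zeta_{Nk}(a,b)$ with $a_j=\nu-\mu+j-1$ $(j\ge1)$ and $b_j=\mu+j+1$ $(j\ge0)$ (i.e. the sequences $\alpha_l=l-1$, $\beta_j=j+1$ shifted by $\nu-\mu$ and $\mu$ respectively). *)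

From mathcomp Require Import all_boot.
Set Implicit Arguments. Unset Strict Implicit. Unset Printing Implicit Defensive.

Fixpoint euler (n k : nat) : nat :=
  match n with
  | 0 => (k == 0)
  | n'.+1 =>
      if k <= n'.+1 then
        (if k is k'.+1 then (n'.+1 - k) * euler n' k' else 0)
        + k.+1 * euler n' k
      else 0
  end.

(* A word omega = (eps_1, ..., eps_N) is w : {ffun 'I_N -> bool}, with
   eps_{i+1} = w i (true = 1, false = 0).
   For t = i+1, j = #{l < t : eps_l = 0} = #{l' < i : w l' = false}. *)
Definition nzeros_before (N : nat) (w : {ffun 'I_N -> bool}) (i : 'I_N) : nat :=
  #|[set l : 'I_N | (l < i) && ~~ w l]|.

Definition gfac (a b : nat -> nat) (N : nat) (w : {ffun 'I_N -> bool})
  (i : 'I_N) : nat :=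
  let j := nzeros_before w i in
  if w i then b j else a (i.+1 - j).

Definition weight (a b : nat -> nat) (N : nat) (w : {ffun 'I_N -> bool}) : nat :=
  \prod_(i < N) gfac a b w i.

Definition zeta (a b : nat -> nat) (N k : nat) : nat :=
  if N is 0 then (k == 0 : nat)
  else \sum_(w : {ffun 'I_N -> bool} | #|[set i | ~~ w i]| == k) weight a b w.

Definition assoc_euler (nu mu N k : nat) : nat :=
  zeta (fun j => nu - mu + j - 1) (fun j => mu + j + 1) N k.

From mathcomp Require Import all_boot.
From mathcomp Require Import zify.
Set Implicit Arguments. Unset Strict Implicit. Unset Printing Implicit Defensive.

(* Splitting a word according to its last letter gives the recurrence
   zeta_{N+1,k} = b_k zeta_{N,k} + a_{N+2-k} zeta_{N,k-1}, because appending a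
   letter leaves the factors g_t of the earlier letters unchanged, and the
   factor of the new letter only depends on the number of zeros before it.
   For rank (1,0) we have a_j = j and b_j = j + 1, so this is exactly the
   Eulerian recurrence for <N+2, k>; the initial values agree as well. *)

Lemma euler_small n k : n < k -> euler n k = 0.
Proof. by elim: n k => [|n IHn] [|k] //= ltnk; case: ifP => //; lia. Qed.

Lemma eulerS n k : euler n.+1 k =
  (if k is k'.+1 then (n.+1 - k) * euler n k' else 0) + k.+1 * euler n k.
Proof.
rewrite /=; case: leqP => // ltnk.
rewrite euler_small ?muln0 ?addn0; last lia.
by case: k ltnk => // k ltnk; rewrite euler_small ?muln0 //; lia.
Qed.

Lemma card_set_ord_recr N (P : pred 'I_N.+1) :
  #|[set i | P i]| = #|[set i : 'I_N | P (lift ord_max i)]| + P ord_max.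
Proof.
have card_setE n (Q : pred 'I_n) : #|[set i | Q i]| = \sum_(i < n) Q i.
  by rewrite -sum1_card big_mkcond; apply: eq_bigr => i _; rewrite inE; case: (Q i).
rewrite !card_setE big_ord_recr /=; congr (_ + _); apply: eq_bigr => i _.
by congr (nat_of_bool (P _)); apply: ord_inj; rewrite lift_max.
Qed.

Definition nzeros N (w : {ffun 'I_N -> bool}) : nat := #|[set i | ~~ w i]|.

Section Words.

Variable N : nat.
Implicit Types (w : {ffun 'I_N -> bool}) (c : bool).

Definition rcons_word w c : {ffun 'I_N.+1 -> bool} :=
  [ffun i => if unlift ord_max i is Some j then w j else c].

Lemma rcons_word_lift w c i : rcons_word w c (lift ord_max i) = w i.
Proof. by rewrite ffunE liftK. Qed.

Lemma rcons_word_max w c : rcons_word w c ord_max = c.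
Proof. by rewrite ffunE unlift_none. Qed.

Lemma rcons_word_bij : bijective (fun wc => rcons_word wc.1 wc.2).
Proof.
exists (fun u : {ffun 'I_N.+1 -> bool} => ([ffun i => u (lift ord_max i)], u ord_max)).
  move=> [w c] /=; rewrite rcons_word_max; congr (_, _).
  by apply/ffunP => i; rewrite ffunE rcons_word_lift.
move=> u; apply/ffunP => i; rewrite ffunE.
by case: unliftP => [j ->|->]; rewrite ?ffunE.
Qed.

Lemma sum_rcons_word (F : {ffun 'I_N.+1 -> bool} -> nat) :
  \sum_u F u = \sum_w (F (rcons_word w true) + F (rcons_word w false)).
Proof.
rewrite (reindex _ (onW_bij _ rcons_word_bij)) /=.
rewrite -(pair_big xpredT xpredT (fun w c => F (rcons_word w c))) /=.
by apply: eq_bigr => w _; rewrite big_bool.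
Qed.

Lemma nzeros_rcons w c : nzeros (rcons_word w c) = nzeros w + ~~ c.
Proof.
rewrite /nzeros card_set_ord_recr rcons_word_max.
by under eq_finset do rewrite rcons_word_lift.
Qed.

Lemma nzeros_before_lift w c i :
  nzeros_before (rcons_word w c) (lift ord_max i) = nzeros_before w i.
Proof.
rewrite /nzeros_before card_set_ord_recr !lift_max ltnNge ltnW // addn0.
by under eq_finset do rewrite rcons_word_lift lift_max.
Qed.

Lemma nzeros_before_max w c : nzeros_before (rcons_word w c) ord_max = nzeros w.
Proof.
rewrite /nzeros_before card_set_ord_recr ltnn addn0.
by under eq_finset do rewrite rcons_word_lift lift_max ltn_ord.
Qed.

Lemma weight_rcons a b w c : weight a b (rcons_word w c) =
  weight a b w * (if c then b (nzeros w) else a (N.+1 - nzeros w)).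
Proof.
have widen_lift (i : 'I_N) : widen_ord (leqnSn N) i = lift ord_max i.
  by apply: ord_inj; rewrite lift_max.
rewrite /weight big_ord_recr /= {2}/gfac rcons_word_max nzeros_before_max.
congr (_ * _); apply: eq_bigr => i _.
by rewrite widen_lift /gfac rcons_word_lift nzeros_before_lift lift_max.
Qed.

End Words.

Lemma zetaE a b N k :
  zeta a b N k = \sum_(w : {ffun 'I_N -> bool} | nzeros w == k) weight a b w.
Proof.
case: N => [|N] //; rewrite [LHS]/=.
have nzeros0 (w : {ffun 'I_0 -> bool}) : nzeros w = 0 by apply: eq_card0 => -[].
under eq_bigl => w do rewrite nzeros0 eq_sym.
case: (k == 0); last by rewrite big_pred0.
rewrite (big_pred1 [ffun=> true]) => [|w]; first by rewrite /weight big_ord0.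
by apply/esym/eqP/ffunP => -[].
Qed.

Lemma zetaS a b N k : zeta a b N.+1 k =
  zeta a b N k * b k + (if k is k'.+1 then zeta a b N k' * a (N.+1 - k') else 0).
Proof.
rewrite !zetaE big_mkcond sum_rcons_word big_split /=; congr (_ + _).
  rewrite big_distrl [RHS]big_mkcond /=; apply: eq_bigr => w _.
  by rewrite nzeros_rcons weight_rcons addn0; case: eqP => // ->.
case: k => [|k]; first by rewrite big1 // => w _; rewrite nzeros_rcons addn1.
rewrite zetaE big_distrl [RHS]big_mkcond /=; apply: eq_bigr => w _.
by rewrite nzeros_rcons weight_rcons addn1 eqSS; case: eqP => // ->.
Qed.

Lemma assoc_euler10_S N k : assoc_euler 1 0 N.+1 k =
  (if k is k'.+1 then (N.+2 - k) * assoc_euler 1 0 N k' else 0)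
  + k.+1 * assoc_euler 1 0 N k.
Proof.
rewrite /assoc_euler zetaS addnC add0n addn1; congr (_ + _); last exact: mulnC.
by case: k => // k; rewrite mulnC; congr (_ * _); lia.
Qed.

Lemma euler_assoc_euler10 N k : euler N.+1 k = assoc_euler 1 0 N k.
Proof.
elim: N k => [|N IHN] k; first by case: k => [|[|k]] //; rewrite euler_small.
by rewrite eulerS assoc_euler10_S; case: k => [|k]; rewrite !IHN.
Qed.

Theorem mainTheorem14 (n m : nat) (hm : m <= n - 1) (hn : 0 < n) :
  euler n m = assoc_euler 1 0 (n - 1) m.
Proof. by case: n hn hm => // n _ _; rewrite subn1; exact: euler_assoc_euler10. Qed.
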